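(* Let $f,g:[0,1]^d\to\mathbb{R}$ have bounded HK$\mathbf{0}$-variation. Then for all $\mathbf{a},\mathbf{b}\in[0,1]^d$ with $\mathbf{a}\le\mathbf{b}$, $$\operatorname{Var}_{HK\mathbf{0}}(f+g;[\mathbf{0},\mathbf{b}])-\operatorname{Var}_{HK\mathbf{0}}(f+g;[\mathbf{0},\mathbf{a}])\le\operatorname{Var}_{HK\mathbf{0}}(f;[\mathbf{0},\mathbf{b}])+\operatorname{Var}_{HK\mathbf{0}}(g;[\mathbf{0},\mathbf{b}])-\operatorname{Var}_{HK\mathbf{0}}(f;[\mathbf{0},\mathbf{a}])-\operatorname{Var}_{HK\mathbf{0}}(g;[\mathbf{0},\mathbf{a}]).$$
   Context: For a box $[\mathbf{c},\mathbf{e}]$, $\Delta(f;[\mathbf{c},\mathbf{e}])$ is the alternating sum $\sum_{j\in\{0,1\}^s}(-1)^{\sum j_i}f$ over its vertices (sign $+$ at $\mathbf{e}$). The Vitali variation of $f$ on a box is the supremum over grid partitions of the box (generated by one-dimensional partitions of each coordinate interval) of $\sum|\Delta(f;A)|$ over cells $A$. For $\mathbf{a}\in[0,1]^d$, $\mathbf{a}\ne\mathbf{0}$, $\operatorname{Var}_{HK\mathbf{0}}(f;[\mathbf{0},\mathbf{a}])$ is the sum over all nonempty $\{i_1<\dots<i_s\}\subseteq\{1,\dots,d\}$ of the $s$-dimensional Vitali variation of $f$ restricted to the face $\{\mathbf{x}\in[\mathbf{0},\mathbf{a}]:x_j=0\text{ for }j\notin\{i_1,\dots,i_s\}\}$ (degenerate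 faces contributing $0$), and $\operatorname{Var}_{HK\mathbf{0}}(f;[\mathbf{0},\mathbf{0}])=0$. $f$ has bounded HK$\mathbf{0}$-variation if $\operatorname{Var}_{HK\mathbf{0}}(f;[0,1]^d)<\infty$. *)

From HB Require Import structures.
From mathcomp Require Import all_boot all_order all_algebra.
From mathcomp Require Import all_classical all_reals ereal.
Set Implicit Arguments. Unset Strict Implicit. Unset Printing Implicit Defensive.
Import Order.TTheory GRing.Theory Num.Theory.
Local Open Scope ring_scope.

Definition is_partition (R : realType) (lo hi : R) (s : seq R) : bool :=
  [&& (1 < size s)%N, sorted <%R s, head 0 s == lo & last 0 s == hi].

(* Coordinates outside S are those of c, e
   (which will both be 0 on the face). *)
Definition delta (R : realType) (d : nat) (S : {set 'I_d})
  (f : ('I_d -> R) -> R) (c e : 'I_d -> R) : R :=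
  \sum_(J in powerset S) (-1) ^+ #|J| * f (fun i => if i \in J then c i else e i).

(* Sum of |Delta| over the cells of the grid partition generated by the
   one-dimensional partitions P i (i in S) of the face
   {x in [0,a] : x_j = 0 for j notin S}. *)
Definition grid_sum (R : realType) (d : nat) (S : {set 'I_d})
  (f : ('I_d -> R) -> R) (P : 'I_d -> seq R) : R :=
  let M := (\max_(i : 'I_d) size (P i))%N in
  \sum_(k : {ffun 'I_d -> 'I_M} |
          [forall i, if i \in S then (val (k i) < (size (P i)).-1)%N
                     else val (k i) == 0%N])
    `| delta S f (fun i => if i \in S then nth 0 (P i) (k i) else 0)
                 (fun i => if i \in S then nth 0 (P i) (k i).+1 else 0) |.

Definition vitali_face (R : realType) (d : nat) (f : ('I_d -> R) -> R)
  (S : {set 'I_d}) (a : 'I_d -> R) : \bar R :=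
  if [exists i in S, a i == 0] then 0%E
  else ereal_sup [set x : \bar R | exists P : 'I_d -> seq R,
          (forall i, i \in S -> is_partition 0 (a i) (P i)) /\
          x = (grid_sum S f P)%:E].

Definition var_HK0 (R : realType) (d : nat) (f : ('I_d -> R) -> R)
  (a : 'I_d -> R) : \bar R :=
  (\sum_(S : {set 'I_d} | S != finset.set0) vitali_face f S a)%E.

(* Take a grid
   Q on [0,b] and grids P1, P2 on [0,a], refine all three to one grid Rb on
   [0,b] and let Ra be its restriction to [0,a]. Refining only increases grid
   sums, and the grid sum over Rb is the sum over Ra plus a sum over the
   remaining cells, which is subadditive in the function. Hence
     S(f+g;Q) + S(f;P1) + S(g;P2) <= S(f;Rb) + S(g;Rb) + S(f+g;Ra),
   and taking suprema face by face and summing over the faces gives the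
   inequality. Every face variation is finite on [0,x] for x <= 1, since each
   grid on [0,x] extends to a grid on [0,1] with a larger grid sum. *)

From HB Require Import structures.
From mathcomp Require Import all_boot all_order all_algebra.
From mathcomp Require Import all_classical all_reals ereal.
From mathcomp Require Import ring lra.
Set Implicit Arguments. Unset Strict Implicit. Unset Printing Implicit Defensive.
Import Order.TTheory GRing.Theory Num.Theory.
Local Open Scope ring_scope.

Section PairSum.
Variables (R : numDomainType) (T : eqType).
Implicit Types (F G : T -> T -> R) (s : seq T).

Fixpoint pairsum F s : R :=
  if s is x :: (y :: _) as s' then F x y + pairsum F s' else 0.
Arguments pairsum F s : simpl nomatch.

Lemma pairsum_ge0 F s : (forall u v, 0 <= F u v) -> 0 <= pairsum F s.
Proof. by move=> F_ge0; elim: s => [|x [|y s] IH] //=; rewrite addr_ge0. Qed.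

Lemma ler_pairsum F G s : (forall u v, F u v <= G u v) -> pairsum F s <= pairsum G s.
Proof. by move=> leFG; elim: s => [|x [|y s] IH] //=; rewrite lerD. Qed.

Lemma eq_pairsum F G s : F =2 G -> pairsum F s = pairsum G s.
Proof. by move=> eqFG; elim: s => [|x [|y s] IH] //=; rewrite eqFG IH. Qed.

Lemma pairsumD F G s :
  pairsum (fun u v => F u v + G u v) s = pairsum F s + pairsum G s.
Proof. by elim: s => [|x [|y s] IH] /=; rewrite ?addr0 // IH addrACA. Qed.

Lemma pairsum_take_drop F s i :
  pairsum F s = pairsum F (take i.+1 s) + pairsum F (drop i s).
Proof.
elim: s i => [|x [|y s] IH] [|i] //=; rewrite ?addr0 ?add0r ?drop0 //.
by rewrite (IH i) addrA.
Qed.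

Lemma pairsum_nth (x0 : T) F s :
  pairsum F s = \sum_(m < (size s).-1) F (nth x0 s m) (nth x0 s m.+1).
Proof.
elim: s => [|x [|y s] IH]; rewrite ?big_ord0 //.
by rewrite [LHS]/= IH big_ord_recl.
Qed.

Lemma pairsum_subseq F x s s' :
  (forall u t v, F u v <= F u t + F t v) -> (forall u v, 0 <= F u v) ->
  subseq s s' -> last x s = last x s' -> pairsum F (x :: s) <= pairsum F (x :: s').
Proof.
move=> F_tri F_ge0; elim: s' x s => [|y s' IH] x [|z s] //=.
- by move=> _ _; rewrite addr_ge0 // pairsum_ge0.
- case: eqP => [-> sub_s last_s | _ sub_zs last_s].
    by rewrite lerD // IH.
  apply: le_trans (_ : F x y + (F y z + pairsum F (z :: s)) <= _).
    by rewrite addrA lerD.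
  by rewrite lerD // (IH y (z :: s)).
Qed.

Definition refines (p p' : seq T) : bool :=
  match p, p' with
  | x :: s, x' :: s' => [&& x == x', subseq s s' & last x s == last x' s']
  | _, _ => false
  end.

Lemma pairsum_refines F p p' :
  (forall u t v, F u v <= F u t + F t v) -> (forall u v, 0 <= F u v) ->
  refines p p' -> pairsum F p <= pairsum F p'.
Proof.
case: p p' => [|x s] [|x' s'] // F_tri F_ge0 /and3P [/eqP <- sub_s /eqP last_s].
exact: pairsum_subseq.
Qed.

End PairSum.

Section Delta.
Variables (R : realType) (d : nat).
Implicit Types (c e : 'I_d -> R) (f g : ('I_d -> R) -> R) (S : {set 'I_d}).

Definition upd c (j : 'I_d) (u : R) : 'I_d -> R :=
  fun i => if i == j then u else c i.

Lemma updC c i j u u' : i != j -> upd (upd c j u) i u' = upd (upd c i u') j u.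
Proof.
move=> neq_ij; apply: funext => k; rewrite /upd.
by case: (eqVneq k i) => // ->; rewrite (negbTE neq_ij).
Qed.

Lemma deltaD S f g c e :
  delta S (fun x => f x + g x) c e = delta S f c e + delta S g c e.
Proof. by rewrite /delta -big_split; apply: eq_bigr => J _; rewrite mulrDr. Qed.

Definition delta_at S j f c e (w : R) : R :=
  \sum_(J in powerset (S :\ j)) (-1) ^+ #|J| *
     f (fun i => if i \in J then c i else if i == j then w else e i).

Lemma delta_atE S j f c e : j \in S ->
  delta S f c e = delta_at S j f c e (e j) - delta_at S j f c e (c j).
Proof.
move=> jS; rewrite /delta (bigID (fun J : {set 'I_d} => j \in J)) /= addrC.
congr (_ + _).
  apply: eq_big => [J|J _]; first by rewrite !powersetE subsetD1.
  congr (_ * f _); apply: funext => i; case: ifP => // _.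
  by case: eqP => // ->.
rewrite (reindex_onto (fun J => j |: J) (fun J => J :\ j)); last first.
  by move=> J /andP [_ jJ]; rewrite finset.setD1K.
rewrite /delta_at -sumrN; apply: eq_big => [J|J].
  apply/idP/idP.
    move=> /andP [/andP [JS _] /eqP eqJ].
    have jNJ : j \notin J by rewrite -eqJ !inE eqxx.
    rewrite powersetE subsetD1 jNJ andbT.
    rewrite powersetE in JS; exact: fintype.subset_trans (finset.subsetUr _ _) JS.
  rewrite powersetE subsetD1 => /andP [JS jNJ].
  rewrite finset.setU1K // eqxx setU11 andbT powersetE.
  by rewrite finset.subUset finset.sub1set jS JS.
move=> /andP [_ /eqP eqJ]; have jNJ : j \notin J by rewrite -eqJ !inE eqxx.
rewrite cardsU1 jNJ /= exprS mulN1r mulNr; congr (- (_ * f _)).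
apply: funext => i; rewrite !inE; case: (i \in J); rewrite ?orbT //= orbF.
by case: eqP => // ->.
Qed.

Lemma delta_at_upd S j f c e u v :
  delta_at S j f (upd c j u) (upd e j v) = delta_at S j f c e.
Proof.
apply: funext => w; apply: eq_bigr => J; rewrite powersetE subsetD1 => /andP [_ jNJ].
congr (_ * f _); apply: funext => i; rewrite /upd.
case: ifP => iJ; first by case: eqP => // eq_ij; move: jNJ; rewrite -eq_ij iJ.
by case: eqP.
Qed.

Lemma delta_upd_split S j f c e u t v : j \in S ->
  delta S f (upd c j u) (upd e j v) =
  delta S f (upd c j u) (upd e j t) + delta S f (upd c j t) (upd e j v).
Proof. by move=> jS; rewrite !(delta_atE _ _ _ jS) !delta_at_upd /upd !eqxx; ring. Qed.

End Delta.

Section GridSumRec.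
Variables (R : realType) (d : nat) (S : {set 'I_d}).
Implicit Types (c e : 'I_d -> R) (f g h : ('I_d -> R) -> R) (P : 'I_d -> seq R)
  (n : 'I_d -> nat) (js : seq 'I_d).

(* Grid sum with the cells' j-th sides running over consecutive points of P j
   for j in js, and given by the box [c,e] in the other coordinates; for
   js = enum S and c = e = 0 it is [grid_sum S h P] (see grid_sum_recE). *)
Fixpoint grid_sum_rec h P js c e : R :=
  if js is j :: js' then
    pairsum (fun u v => grid_sum_rec h P js' (upd c j u) (upd e j v)) (P j)
  else `|delta S h c e|.

Lemma grid_sum_rec_ge0 h P js c e : 0 <= grid_sum_rec h P js c e.
Proof. by elim: js c e => [|j js IH] c e /=; rewrite ?pairsum_ge0. Qed.

Lemma grid_sum_rec_addf f g P js c e :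
  grid_sum_rec (fun x => f x + g x) P js c e <=
  grid_sum_rec f P js c e + grid_sum_rec g P js c e.
Proof.
elim: js c e => [|j js IH] c e /=; first by rewrite deltaD ler_normD.
by rewrite -pairsumD ler_pairsum.
Qed.

Lemma grid_sum_rec_upd_split h P js c e j u t v : j \in S -> j \notin js ->
  grid_sum_rec h P js (upd c j u) (upd e j v) <=
  grid_sum_rec h P js (upd c j u) (upd e j t) +
  grid_sum_rec h P js (upd c j t) (upd e j v).
Proof.
move=> jS; elim: js c e => [|i js IH] c e /=.
  by rewrite (delta_upd_split _ _ _ u t v jS) ler_normD.
rewrite inE negb_or eq_sym => /andP [neq_ij jNjs].
rewrite -pairsumD; apply: ler_pairsum => u' v'.
by rewrite !(updC _ _ _ neq_ij) IH.
Qed.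

Lemma grid_sum_rec_refines h P P' js c e :
  {subset js <= S} -> uniq js -> (forall j, j \in js -> refines (P j) (P' j)) ->
  grid_sum_rec h P js c e <= grid_sum_rec h P' js c e.
Proof.
elim: js c e => [|j js IH] c e //= /allP /= /andP [jS jsS] /andP [jNjs js_uniq] ref.
apply: le_trans (ler_pairsum _ _) (pairsum_refines _ _ (ref j (mem_head _ _))).
- move=> u v; apply: IH => //; first exact/allP.
  by move=> k k_js; rewrite ref // inE k_js orbT.
- by move=> u t v; exact: grid_sum_rec_upd_split.
- by move=> u v; exact: grid_sum_rec_ge0.
Qed.

(* The part of [grid_sum_rec h P] coming from cells that are not inside the
   grid truncated to the first (n i).+1 points of each P i. *)
Fixpoint grid_sum_out h P n js c e : R :=
  if js is j :: js' then
    pairsum (fun u v => grid_sum_out h P n js' (upd c j u) (upd e j v))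
      (take (n j).+1 (P j)) +
    pairsum (fun u v => grid_sum_rec h P js' (upd c j u) (upd e j v))
      (drop (n j) (P j))
  else 0.

Lemma grid_sum_rec_take h P n js c e :
  grid_sum_rec h P js c e =
  grid_sum_rec h (fun i => take (n i).+1 (P i)) js c e + grid_sum_out h P n js c e.
Proof.
elim: js c e => [|j js IH] c e /=; first by rewrite addr0.
rewrite (pairsum_take_drop _ _ (n j)) addrA -pairsumD.
by congr (_ + _); apply: eq_pairsum => u v.
Qed.

Lemma grid_sum_out_ge0 h P n js c e : 0 <= grid_sum_out h P n js c e.
Proof.
elim: js c e => [|j js IH] c e //=.
by rewrite addr_ge0 // pairsum_ge0 // => u v; rewrite grid_sum_rec_ge0.
Qed.

Lemma grid_sum_out_addf f g P n js c e :
  grid_sum_out (fun x => f x + g x) P n js c e <=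
  grid_sum_out f P n js c e + grid_sum_out g P n js c e.
Proof.
elim: js c e => [|j js IH] c e /=; first by rewrite addr0.
rewrite addrACA -!pairsumD.
by apply: lerD; apply: ler_pairsum => u v //; exact: grid_sum_rec_addf.
Qed.

Lemma eq_grid_sum_rec h P js c e c' e' :
  (forall i, i \notin js -> c i = c' i /\ e i = e' i) ->
  grid_sum_rec h P js c e = grid_sum_rec h P js c' e'.
Proof.
elim: js c e c' e' => [|j js IH] c e c' e' /= eq_ce.
  have -> : c = c' by apply: funext => i; case: (eq_ce i).
  by have -> : e = e' by apply: funext => i; case: (eq_ce i).
apply: eq_pairsum => u v; apply: IH => i iNjs; rewrite /upd.
by case: eqP => // /eqP neq_ij; apply: eq_ce; rewrite inE negb_or neq_ij.
Qed.

End GridSumRec.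

Section NestedSum.
Variables (R : realType) (d M : nat) (n : 'I_d -> nat).
Variable (F : {ffun 'I_d -> 'I_M} -> R).

Definition fupd (k : {ffun 'I_d -> 'I_M}) (j : 'I_d) (m : 'I_M) : {ffun 'I_d -> 'I_M} :=
  [ffun i => if i == j then m else k i].

Fixpoint nested_sum (js : seq 'I_d) (k : {ffun 'I_d -> 'I_M}) : R :=
  if js is j :: js' then \sum_(m : 'I_M | (m < n j)%N) nested_sum js' (fupd k j m)
  else F k.

Lemma big_ffun_nested js (k0 : {ffun 'I_d -> 'I_M}) : uniq js ->
  \sum_(k : {ffun 'I_d -> 'I_M} |
          [forall i, if i \in js then (k i < n i)%N else k i == k0 i]) F k
  = nested_sum js k0.
Proof.
elim: js k0 => [|j js IH] k0 /=.
  move=> _; apply: big_pred1 => k /=; apply/forallP/eqP => [eq_k|->//].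
  by apply/ffunP => i; apply/eqP; apply: eq_k.
move=> /andP [jNjs js_uniq].
rewrite (partition_big (fun k : {ffun 'I_d -> 'I_M} => k j)
                       (fun m : 'I_M => (m < n j)%N));
  last by move=> k /forallP /(_ j); rewrite mem_head.
apply: eq_bigr => m m_lt; rewrite -IH //; apply: eq_bigl => k.
apply/andP/forallP => [[/forallP kP /eqP kj] i|kP].
  rewrite ffunE; case: (eqVneq i j) => [->|neq_ij]; first by rewrite (negbTE jNjs) kj.
  by have := kP i; rewrite inE (negbTE neq_ij).
have kj : k j == m by have := kP j; rewrite (negbTE jNjs) ffunE eqxx.
split => //; apply/forallP => i; rewrite inE.
case: (eqVneq i j) => [->|neq_ij] /=; first by rewrite (eqP kj).
by have := kP i; rewrite ffunE (negbTE neq_ij).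
Qed.

End NestedSum.

Lemma grid_sum_recE (R : realType) (d : nat) (S : {set 'I_d})
  (h : ('I_d -> R) -> R) (P : 'I_d -> seq R) :
  S != finset.set0 -> (forall i, i \in S -> (1 < size (P i))%N) ->
  grid_sum S h P = grid_sum_rec S h P (enum S) (fun _ => 0) (fun _ => 0).
Proof.
move=> S_neq0 sizeP; rewrite /grid_sum /=.
set M := (\max_(i : 'I_d) size (P i))%N.
have sizeP_le i : (size (P i) <= M)%N by apply: leq_bigmax.
have M_gt0 : (0 < M)%N.
  case/set0Pn: S_neq0 => j jS.
  by apply: leq_trans (sizeP_le j); apply: ltnW (sizeP j jS).
pose k0 : {ffun 'I_d -> 'I_M} := [ffun => Ordinal M_gt0].
pose cell (k : {ffun 'I_d -> 'I_M}) :=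
  `|delta S h (fun i => if i \in S then nth 0 (P i) (k i) else 0)
              (fun i => if i \in S then nth 0 (P i) (k i).+1 else 0)|.
rewrite (eq_bigl (fun k : {ffun 'I_d -> 'I_M} =>
    [forall i, if i \in enum S then (k i < (size (P i)).-1)%N
               else k i == k0 i])); last first.
  by move=> k; apply: eq_forallb => i; rewrite mem_enum ffunE; case: (i \in S).
rewrite (big_ffun_nested (fun i => (size (P i)).-1) cell k0 (enum_uniq _)).
have nestedE js k : {subset js <= S} ->
  nested_sum (fun i => (size (P i)).-1) cell js k =
  grid_sum_rec S h P js (fun i => if i \in S then nth 0 (P i) (k i) else 0)
                        (fun i => if i \in S then nth 0 (P i) (k i).+1 else 0).
  elim: js k => [|j js IH] k //= /allP /= /andP [jS /allP jsS].
  rewrite (pairsum_nth 0) (big_ord_widen M (fun m => grid_sum_rec S h P js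
    (upd _ j (nth 0 (P j) m)) (upd _ j (nth 0 (P j) m.+1)))); last first.
    exact: leq_trans (leq_pred _) (sizeP_le j).
  apply: eq_bigr => m _; rewrite IH //; congr grid_sum_rec; apply: funext => i;
    by rewrite /upd /fupd ffunE; case: (eqVneq i j) => [->|]; rewrite ?jS.
rewrite nestedE => [|i]; last by rewrite mem_enum.
by apply: eq_grid_sum_rec => i; rewrite mem_enum => /negbTE ->.
Qed.

Section Partitions.
Variable R : realType.
Implicit Types (s p q : seq R) (x y lo hi a b : R).

Lemma path_mem_ge y s x : path <%R y s -> x \in y :: s -> y <= x.
Proof.
move=> ys; rewrite inE => /orP [/eqP -> //|xs].
by have /allP /(_ x xs) /ltW := order_path_min lt_trans ys.
Qed.

Lemma path_mem_le_last y s x : path <%R y s -> x \in y :: s -> x <= last y s.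
Proof.
elim: s y x => [|z s IH] y x /=; first by move=> _; rewrite inE => /eqP ->.
move=> /andP [lt_yz zs]; rewrite inE => /orP [/eqP ->|]; last exact: IH.
exact: le_trans (ltW lt_yz) (IH _ _ zs (mem_head _ _)).
Qed.

Lemma is_partition_mem lo hi s x : is_partition lo hi s -> x \in s -> lo <= x <= hi.
Proof.
case: s => [|y s] /and4P [_ ys /eqP /= <- /eqP /= <-] // xs.
by rewrite (path_mem_ge ys xs) (path_mem_le_last ys xs).
Qed.

Lemma is_partition_head lo hi s : is_partition lo hi s -> lo \in s.
Proof. by case: s => [|y s] /and4P [_ _ /eqP /= <- _] //; rewrite mem_head. Qed.

Lemma is_partition_last lo hi s : is_partition lo hi s -> hi \in s.
Proof. by case: s => [|y s] /and4P [_ _ _ /eqP /= <-] //; rewrite mem_last. Qed.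

Lemma is_partition_lt lo hi s : is_partition lo hi s -> lo < hi.
Proof.
case: s => [|y [|z s]] /and4P [//= _ /andP [lt_yz zs] /eqP /= <- /eqP /= <-].
exact: lt_le_trans lt_yz (path_mem_le_last zs (mem_head _ _)).
Qed.

Lemma sorted_is_partition lo hi s : sorted <%R s -> lo < hi ->
  (forall x, x \in s -> lo <= x <= hi) -> lo \in s -> hi \in s ->
  is_partition lo hi s.
Proof.
case: s => [//|y s] /= ys lt_lohi s_bnd los his.
have lo_y : lo = y.
  apply/eqP; rewrite eq_le (path_mem_ge ys los) andbT.
  by case/andP: (s_bnd y (mem_head _ _)).
subst lo.
have last_s : last y s = hi.
  apply/eqP; rewrite eq_le (path_mem_le_last ys his) andbT.
  by case/andP: (s_bnd _ (mem_last y s)).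
rewrite /is_partition /= ys last_s !eqxx !andbT.
by case: s {ys s_bnd los his} last_s => //= eq_yhi; rewrite eq_yhi ltxx in lt_lohi.
Qed.

Lemma lt_sorted_subseq s1 s2 : sorted <%R s1 -> sorted <%R s2 -> {subset s1 <= s2} ->
  subseq s1 s2.
Proof.
move=> s1_sorted s2_sorted s12.
have <- : [seq x <- s2 | x \in s1] = s1.
  apply: lt_sorted_eq => //; first exact: lt_sorted_filter.
  by move=> x; rewrite mem_filter; case x_s1: (x \in s1) => //=; exact: s12 x_s1.
exact: filter_subseq.
Qed.

Lemma is_partition_refines lo hi p s : is_partition lo hi p -> is_partition lo hi s ->
  {subset p <= s} -> refines p s.
Proof.
case: p s => [|x p] [|y s] /and4P [_ /= xp /eqP /= <- /eqP /= last_p] //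
  /and4P [_ /= ys /eqP /= eq_y /eqP /= last_s] ps; subst y.
rewrite /refines eqxx last_p last_s eqxx andbT /=.
apply: lt_sorted_subseq; [exact: path_sorted xp | exact: path_sorted ys |].
move=> z zp; have := ps z; rewrite !inE zp orbT => /(_ isT) /orP [/eqP eq_zx|//].
have /allP /(_ z zp) := order_path_min lt_trans xp.
by rewrite eq_zx ltxx.
Qed.

Definition refinement q p1 p2 := sort <=%R (undup (q ++ p1 ++ p2)).

Lemma refinement_sorted q p1 p2 : sorted <%R (refinement q p1 p2).
Proof. by rewrite /refinement sort_lt_sorted undup_uniq. Qed.

Lemma mem_refinement q p1 p2 x :
  (x \in refinement q p1 p2) = [|| x \in q, x \in p1 | x \in p2].
Proof. by rewrite /refinement mem_sort mem_undup !mem_cat. Qed.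

Lemma take_count_le s a : sorted <%R s -> has (<=%R^~ a) s ->
  take (count (<=%R^~ a) s).-1.+1 s = [seq x <- s | x <= a].
Proof.
move=> s_sorted s_a.
have s_le : sorted <=%R s by move: s_sorted; rewrite lt_sorted_uniq_le => /andP [].
by rewrite (sorted_filter_le a s_le) prednK // -has_count.
Qed.

Lemma refinement_is_partition lo a b q p1 p2 : lo < a <= b ->
  is_partition lo b q -> is_partition lo a p1 -> is_partition lo a p2 ->
  let r := refinement q p1 p2 in
  let ra := take (count (<=%R^~ a) r).-1.+1 r in
  [/\ is_partition lo b r, is_partition lo a ra,
      refines q r, refines p1 ra & refines p2 ra].
Proof.
move=> /andP [lt_loa le_ab] qP p1P p2P r ra.
have r_sorted : sorted <%R r by exact: refinement_sorted.
have p_bnd p x : is_partition lo a p -> x \in p -> lo <= x <= a.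
  by move=> pP; exact: is_partition_mem pP.
have r_bnd x : x \in r -> lo <= x <= b.
  rewrite mem_refinement => /or3P [xq|/(p_bnd _ _ p1P)|/(p_bnd _ _ p2P)].
  - exact: is_partition_mem qP xq.
  - by case/andP => -> /le_trans ->.
  - by case/andP => -> /le_trans ->.
have lo_r : lo \in r by rewrite mem_refinement (is_partition_head qP).
have rP : is_partition lo b r.
  apply: sorted_is_partition => //; last first.
    by rewrite mem_refinement (is_partition_last qP).
  exact: lt_le_trans lt_loa le_ab.
have raE : ra = [seq x <- r | x <= a].
  by apply: take_count_le => //; apply/hasP; exists lo => //; exact: ltW.
have raP : is_partition lo a ra.
  rewrite raE; apply: sorted_is_partition => //.
  - exact: lt_sorted_filter.
  - by move=> x; rewrite mem_filter => /andP [-> /r_bnd /andP [->]].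
  - by rewrite mem_filter lo_r ltW.
  - by rewrite mem_filter lexx mem_refinement (is_partition_last p1P) orbT.
have sub_ra p x : is_partition lo a p -> x \in p -> x \in r -> x \in ra.
  by move=> pP xp xr; rewrite raE mem_filter xr andbT; case/andP: (p_bnd _ _ pP xp).
split => //.
- by apply: (is_partition_refines qP rP) => x xq; rewrite mem_refinement xq.
- apply: (is_partition_refines p1P raP) => x xp; apply: (sub_ra _ _ p1P xp).
  by rewrite mem_refinement xp orbT.
- apply: (is_partition_refines p2P raP) => x xp; apply: (sub_ra _ _ p2P xp).
  by rewrite mem_refinement xp !orbT.
Qed.

End Partitions.

Section Faces.
Variables (R : realType) (d : nat).
Implicit Types (S : {set 'I_d}) (x y a b : 'I_d -> R) (f g h : ('I_d -> R) -> R)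
  (P Q : 'I_d -> seq R).

Definition partitions S x : set ('I_d -> seq R) :=
  [set P | forall i, i \in S -> is_partition 0 (x i) (P i)].

Definition face_sums h S x : set R := [set grid_sum S h P | P in partitions S x].

(* [sup] is 0 on sets that are empty or unbounded above; [face_var] is only
   used for faces whose grid sums are bounded. *)
Definition face_var h S x : R := sup (face_sums h S x).

Lemma partitions_gt0 S x P : partitions S x P -> forall i, i \in S -> 0 < x i.
Proof. by move=> xP i iS; exact: is_partition_lt (xP i iS). Qed.

Lemma partitions_size S x P :
  partitions S x P -> forall i, i \in S -> (1 < size (P i))%N.
Proof. by move=> xP i /xP /and4P []. Qed.

Lemma partitions_trivial S x : (forall i, i \in S -> 0 < x i) ->
  partitions S x (fun i => [:: 0; x i]).
Proof. by move=> x_gt0 i iS; rewrite /is_partition /= x_gt0 // !eqxx. Qed.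

Lemma grid_sum_addf S f g P :
  grid_sum S (fun z => f z + g z) P <= grid_sum S f P + grid_sum S g P.
Proof. by rewrite /grid_sum -big_split ler_sum // => k _; rewrite deltaD ler_normD. Qed.

Lemma grid_sum_refines S x y h P P' : S != finset.set0 ->
  partitions S x P -> partitions S y P' ->
  (forall i, i \in S -> refines (P i) (P' i)) ->
  grid_sum S h P <= grid_sum S h P'.
Proof.
move=> S_neq0 xP yP' PP'.
rewrite (grid_sum_recE h S_neq0 (partitions_size xP)).
rewrite (grid_sum_recE h S_neq0 (partitions_size yP')).
apply: grid_sum_rec_refines; rewrite ?enum_uniq // => i; rewrite mem_enum //.
exact: PP'.
Qed.

Section Refinement.
Variables (S : {set 'I_d}) (a b : 'I_d -> R) (Q P1 P2 : 'I_d -> seq R).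
Hypotheses (ab : forall i, i \in S -> 0 < a i <= b i) (bQ : partitions S b Q)
  (aP1 : partitions S a P1) (aP2 : partitions S a P2).

Let Rb i := refinement (Q i) (P1 i) (P2 i).
Let cut i := (count (<=%R^~ (a i)) (Rb i)).-1.
Let Ra i := take (cut i).+1 (Rb i).

Let refinementP i : i \in S ->
  [/\ is_partition 0 (b i) (Rb i), is_partition 0 (a i) (Ra i),
      refines (Q i) (Rb i), refines (P1 i) (Ra i) & refines (P2 i) (Ra i)].
Proof. by move=> iS; apply: refinement_is_partition; rewrite ?ab ?bQ ?aP1 ?aP2. Qed.

Let bRb : partitions S b Rb. Proof. by move=> i /refinementP []. Qed.
Let aRa : partitions S a Ra. Proof. by move=> i /refinementP []. Qed.

Hypothesis S_neq0 : S != finset.set0.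

Let grid_sum_cut h :
  grid_sum S h Rb =
  grid_sum S h Ra + grid_sum_out S h Rb cut (enum S) (fun _ => 0) (fun _ => 0).
Proof.
rewrite (grid_sum_recE h S_neq0 (partitions_size bRb)).
rewrite (grid_sum_recE h S_neq0 (partitions_size aRa)).
exact: grid_sum_rec_take.
Qed.

Lemma grid_sum_le_refined h :
  exists2 R', partitions S b R' & grid_sum S h P1 <= grid_sum S h R'.
Proof.
exists Rb => //; rewrite grid_sum_cut.
apply: le_trans (_ : grid_sum S h Ra <= _); last by rewrite lerDl grid_sum_out_ge0.
by apply: grid_sum_refines aP1 aRa _ => // i /refinementP [].
Qed.

Lemma grid_sum_exchange f g :
  exists2 Rb', partitions S b Rb' & exists2 Ra', partitions S a Ra' &
    grid_sum S (fun z => f z + g z) Q + grid_sum S f P1 + grid_sum S g P2 <=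
    grid_sum S f Rb' + grid_sum S g Rb' + grid_sum S (fun z => f z + g z) Ra'.
Proof.
exists Rb => //; exists Ra => //.
have refQ : grid_sum S (fun z => f z + g z) Q <= grid_sum S (fun z => f z + g z) Rb.
  by apply: grid_sum_refines bQ bRb _ => // i /refinementP [].
have refP1 : grid_sum S f P1 <= grid_sum S f Ra.
  by apply: grid_sum_refines aP1 aRa _ => // i /refinementP [].
have refP2 : grid_sum S g P2 <= grid_sum S g Ra.
  by apply: grid_sum_refines aP2 aRa _ => // i /refinementP [].
move: refQ; rewrite !grid_sum_cut => refQ.
have := grid_sum_out_addf S f g Rb cut (enum S) (fun _ => 0) (fun _ => 0).
have := grid_sum_addf S f g Ra.
lra.
Qed.

End Refinement.

Lemma grid_sum_extend S x y h P : S != finset.set0 -> (forall i, x i <= y i) ->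
  partitions S x P -> exists2 Q, partitions S y Q & grid_sum S h P <= grid_sum S h Q.
Proof.
move=> S_neq0 le_xy xP; have x_gt0 := partitions_gt0 xP.
have xy i : i \in S -> 0 < x i <= y i by move=> iS; rewrite x_gt0 ?le_xy.
have y_gt0 i : i \in S -> 0 < y i by move=> /xy /andP [/lt_le_trans]; apply.
exact: (grid_sum_le_refined xy (partitions_trivial y_gt0) xP xP S_neq0 h).
Qed.

Lemma grid_sum_ge0 S h P : 0 <= grid_sum S h P.
Proof. by rewrite /grid_sum sumr_ge0. Qed.

Lemma vitali_faceE h S x : ~~ [exists i in S, x i == 0] ->
  vitali_face h S x = ereal_sup [set z%:E | z in face_sums h S x].
Proof.
move=> x_neq0; rewrite /vitali_face (negbTE x_neq0); congr ereal_sup.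
apply/seteqP; split => [_ [P [xP ->]]|_ [_ [P xP <-] <-]]; last by exists P.
by exists (grid_sum S h P) => //; exists P.
Qed.

Lemma face_sums_trivial h S x : (forall i, 0 <= x i) -> ~~ [exists i in S, x i == 0] ->
  face_sums h S x (grid_sum S h (fun i => [:: 0; x i])).
Proof.
move=> x_ge0 /existsPn x_neq0; exists (fun i => [:: 0; x i]) => //.
by apply: partitions_trivial => i iS; have := x_neq0 i; rewrite iS lt_def x_ge0 andbT.
Qed.

Lemma vitali_face_ge0 h S x : (forall i, 0 <= x i) -> (0 <= vitali_face h S x)%E.
Proof.
move=> x_ge0; case: (boolP [exists i in S, x i == 0]) => [x0|x_neq0].
  by rewrite /vitali_face x0.
rewrite vitali_faceE //; apply: le_trans (ereal_sup_ubound _); last first.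
  by exists (grid_sum S h (fun i => [:: 0; x i])) => //; exact: face_sums_trivial.
by rewrite lee_fin grid_sum_ge0.
Qed.

Lemma vitali_face_var h S x : (forall i, 0 <= x i) -> has_ubound (face_sums h S x) ->
  vitali_face h S x = (face_var h S x)%:E.
Proof.
move=> x_ge0 ub; case: (boolP [exists i in S, x i == 0]) => [x0|x_neq0].
  rewrite /vitali_face x0 /face_var; suff -> : face_sums h S x = set0 by rewrite sup0.
  case/existsP: x0 => i /andP [iS /eqP xi0]; apply/seteqP; split => // z [P xP _].
  by have := partitions_gt0 xP iS; rewrite xi0 ltxx.
rewrite vitali_faceE // ereal_sup_EFin //.
by exists (grid_sum S h (fun i => [:: 0; x i])); exact: face_sums_trivial.
Qed.

Lemma has_ubound_face_sumsD f g S x :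
  has_ubound (face_sums f S x) -> has_ubound (face_sums g S x) ->
  has_ubound (face_sums (fun z => f z + g z) S x).
Proof.
move=> [Bf ubf] [Bg ubg]; exists (Bf + Bg) => _ [P xP <-].
apply: le_trans (grid_sum_addf S f g P) _.
by rewrite lerD // ?ubf ?ubg //; exists P.
Qed.

Lemma has_ubound_face_sums_le h S x y : S != finset.set0 -> (forall i, x i <= y i) ->
  has_ubound (face_sums h S y) -> has_ubound (face_sums h S x).
Proof.
move=> S_neq0 le_xy [B ub]; exists B => _ [P xP <-].
have [Q yQ le_PQ] := grid_sum_extend h S_neq0 le_xy xP.
by apply: le_trans le_PQ (ub _ _); exists Q.
Qed.

Lemma has_ubound_face_sums1 h S : (var_HK0 h (fun _ => 1%R) < +oo)%E ->
  S != finset.set0 -> has_ubound (face_sums h S (fun _ => 1)).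
Proof.
move=> var_fin S_neq0; apply: contrapT => nub.
have one_ge0 (i : 'I_d) : (0 : R) <= 1 by [].
have one_neq0 : ~~ [exists i in S, (1 : R) == 0].
  by apply/existsPn => i; rewrite oner_eq0 andbF.
have face_le_var : (vitali_face h S (fun _ => 1%R) <= var_HK0 h (fun _ => 1%R))%E.
  rewrite /var_HK0 (bigD1 S) //= leeDl // sume_ge0 // => T _.
  exact: vitali_face_ge0.
have := le_lt_trans face_le_var var_fin.
rewrite vitali_faceE // hasNub_ereal_sup //.
by exists (grid_sum S h (fun i => [:: 0; 1])); exact: face_sums_trivial.
Qed.

Lemma face_var_ge_grid_sum h S x P : has_ubound (face_sums h S x) ->
  partitions S x P -> grid_sum S h P <= face_var h S x.
Proof.
move=> ub xP; have PS : face_sums h S x (grid_sum S h P) by exists P.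
have hs : has_sup (face_sums h S x) by split=> //; exists (grid_sum S h P).
exact: sup_upper_bound hs _ PS.
Qed.

Lemma face_var_le h S x P B : partitions S x P ->
  (forall Q, partitions S x Q -> grid_sum S h Q <= B) -> face_var h S x <= B.
Proof.
move=> xP le_B; apply: ge_sup => [|_ [Q xQ <-]]; last exact: le_B.
by exists (grid_sum S h P), P.
Qed.

Lemma face_var_eq0 h S x : ~ (exists P, partitions S x P) -> face_var h S x = 0.
Proof.
move=> no_part; rewrite /face_var; suff -> : face_sums h S x = set0 by rewrite sup0.
by apply/seteqP; split => // z [P xP _]; apply: no_part; exists P.
Qed.

Lemma face_var_addf f g S x :
  has_ubound (face_sums f S x) -> has_ubound (face_sums g S x) ->
  face_var (fun z => f z + g z) S x <= face_var f S x + face_var g S x.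
Proof.
move=> ubf ubg; have [[P xP]|no_part] := pselect (exists P, partitions S x P).
  apply: (face_var_le xP) => Q xQ; apply: le_trans (grid_sum_addf S f g Q) _.
  by rewrite lerD // face_var_ge_grid_sum.
by rewrite !(face_var_eq0 _ no_part) addr0.
Qed.

Lemma face_var_exchange f g S a b : S != finset.set0 ->
  (forall i, 0 <= a i) -> (forall i, a i <= b i) ->
  has_ubound (face_sums f S b) -> has_ubound (face_sums g S b) ->
  has_ubound (face_sums (fun z => f z + g z) S a) ->
  face_var (fun z => f z + g z) S b + face_var f S a + face_var g S a <=
  face_var f S b + face_var g S b + face_var (fun z => f z + g z) S a.
Proof.
move=> S_neq0 a_ge0 le_ab ubf ubg ubfg.
have [[P aP]|no_part] := pselect (exists P, partitions S a P); last first.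
  rewrite (face_var_eq0 f no_part) (face_var_eq0 g no_part) (face_var_eq0 _ no_part).
  by rewrite !addr0 face_var_addf.
have ab i : i \in S -> 0 < a i <= b i by move=> iS; rewrite le_ab (partitions_gt0 aP).
have [Q0 bQ0 _] := grid_sum_extend f S_neq0 le_ab aP.
set fg := fun z => f z + g z.
set Vfb := face_var f S b; set Vgb := face_var g S b; set Vfga := face_var fg S a.
suff : face_var fg S b <= Vfb + Vgb + Vfga - face_var f S a - face_var g S a by lra.
apply: (face_var_le bQ0) => Q bQ.
suff : face_var f S a <= Vfb + Vgb + Vfga - face_var g S a - grid_sum S fg Q by lra.
apply: (face_var_le aP) => P1 aP1.
suff : face_var g S a <= Vfb + Vgb + Vfga - grid_sum S fg Q - grid_sum S f P1 by lra.
apply: (face_var_le aP) => P2 aP2.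
have [Rb bRb [Ra aRa]] := grid_sum_exchange ab bQ aP1 aP2 S_neq0 f g.
have := face_var_ge_grid_sum ubf bRb; have := face_var_ge_grid_sum ubg bRb.
have := face_var_ge_grid_sum ubfg aRa.
rewrite /Vfb /Vgb /Vfga /fg; lra.
Qed.

Lemma var_HK0_face_var h x : (forall i, 0 <= x i) ->
  (forall S, S != finset.set0 -> has_ubound (face_sums h S x)) ->
  var_HK0 h x = (\sum_(S : {set 'I_d} | S != finset.set0) face_var h S x)%:E.
Proof.
move=> x_ge0 ub; rewrite /var_HK0 -sumEFin.
by apply: eq_bigr => S /ub; exact: vitali_face_var.
Qed.

End Faces.

Unset Implicit Arguments.

Theorem lemma1 (R : realType) (d : nat) (f g : ('I_d -> R) -> R)
  (hf : (var_HK0 f (fun _ => 1%R) < +oo)%E)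
  (hg : (var_HK0 g (fun _ => 1%R) < +oo)%E)
  (a b : 'I_d -> R)
  (ha : forall i, 0 <= a i <= 1) (hb : forall i, 0 <= b i <= 1)
  (hab : forall i, a i <= b i) :
  (var_HK0 (fun x => (f x + g x)%R) b - var_HK0 (fun x => (f x + g x)%R) a
   <= var_HK0 f b + var_HK0 g b - var_HK0 f a - var_HK0 g a)%E.
Proof.
have ub (h : ('I_d -> R) -> R) (x : 'I_d -> R) : (var_HK0 h (fun _ => 1%R) < +oo)%E ->
    (forall i, 0 <= x i <= 1) ->
    forall S, S != finset.set0 -> has_ubound (face_sums h S x).
  move=> h_fin x01 S S_neq0.
  apply: has_ubound_face_sums_le (has_ubound_face_sums1 h_fin S_neq0) => //.
  by move=> i; case/andP: (x01 i).
have ubfg x : (forall i, 0 <= x i <= 1) -> forall S, S != finset.set0 ->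
    has_ubound (face_sums (fun z => f z + g z) S x).
  by move=> x01 S S_neq0; apply: has_ubound_face_sumsD; apply: ub.
have [a_ge0 b_ge0] : (forall i, 0 <= a i) /\ (forall i, 0 <= b i).
  by split=> i; [case/andP: (ha i) | case/andP: (hb i)].
rewrite (var_HK0_face_var b_ge0 (ubfg _ hb)) (var_HK0_face_var a_ge0 (ubfg _ ha)).
rewrite (var_HK0_face_var b_ge0 (ub _ _ hf hb)) (var_HK0_face_var b_ge0 (ub _ _ hg hb)).
rewrite (var_HK0_face_var a_ge0 (ub _ _ hf ha)) (var_HK0_face_var a_ge0 (ub _ _ hg ha)).
rewrite -EFinD -!EFinB lee_fin.
have := ler_sum (index_enum _) (fun S S_neq0 => face_var_exchange S_neq0 a_ge0 hab
  (ub _ _ hf hb S S_neq0) (ub _ _ hg hb S S_neq0) (ubfg _ ha S S_neq0)).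
rewrite !big_split /=; lra.
Qed.
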